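(* Let $T \in \mathbb{R}^{n_1} \otimes \mathbb{R}^{n_2} \otimes \mathbb{R}^{n_3}$ and let $v \in \mathbb{R}^{n_1} \otimes \mathbb{R}^{n_2} \otimes \mathbb{R}^{n_3}$ be a rank-one tensor. Then $Q(T + v) \geq Q(T) - 1$.
   Context: A rank-one tensor is a nonzero tensor of the form $v_1 \otimes v_2 \otimes v_3$. For $r \geq 0$ let $I_r := \sum_{j=1}^r e_j \otimes e_j \otimes e_j$. The subrank of $T$ is $Q(T) := \max\{ r \mid \exists\ \mathbb{R}\text{-linear } \varphi_i : \mathbb{R}^{n_i} \to \mathbb{R}^r,\ (\varphi_1 \otimes \varphi_2 \otimes \varphi_3) T = I_r\}$. *)

From HB Require Import structures.
From mathcomp Require Import all_boot all_order all_algebra.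
From mathcomp Require Import boolp reals.
Set Implicit Arguments. Unset Strict Implicit. Unset Printing Implicit Defensive.
Import Order.TTheory GRing.Theory Num.Theory.
Local Open Scope ring_scope.

Definition tensor (R : Type) (n1 n2 n3 : nat) := 'I_n1 -> 'I_n2 -> 'I_n3 -> R.

Definition tadd (R : realType) n1 n2 n3 (T S : tensor R n1 n2 n3) : tensor R n1 n2 n3 :=
  fun i j k => T i j k + S i j k.

Definition outer3 (R : realType) n1 n2 n3
  (v1 : 'I_n1 -> R) (v2 : 'I_n2 -> R) (v3 : 'I_n3 -> R) : tensor R n1 n2 n3 :=
  fun i j k => v1 i * v2 j * v3 k.

Definition rank_one (R : realType) n1 n2 n3 (v : tensor R n1 n2 n3) : Prop :=
  (exists i j k, v i j k != 0) /\
  exists v1 v2 v3, forall i j k, v i j k = outer3 v1 v2 v3 i j k.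

Definition unit_tensor (R : realType) (r : nat) : tensor R r r r :=
  fun a b c => ((a == b) && (b == c))%:R.

(* (phi1 (x) phi2 (x) phi3) T, where phi_i : R^{n_i} -> R^r is the linear map
   given by the matrix A_i : 'M_(r, n_i). *)
Definition tmap (R : realType) n1 n2 n3 r
  (A1 : 'M[R]_(r, n1)) (A2 : 'M[R]_(r, n2)) (A3 : 'M[R]_(r, n3))
  (T : tensor R n1 n2 n3) : tensor R r r r :=
  fun a b c => \sum_(i < n1) \sum_(j < n2) \sum_(k < n3)
                 A1 a i * A2 b j * A3 c k * T i j k.

Definition restricts_to_unit (R : realType) n1 n2 n3 (T : tensor R n1 n2 n3) (r : nat) : Prop :=
  exists (A1 : 'M[R]_(r, n1)) (A2 : 'M[R]_(r, n2)) (A3 : 'M[R]_(r, n3)),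
    tmap A1 A2 A3 T = @unit_tensor R r.

(* Any such r satisfies
   r <= n1 (the first flattening of I_r has rank r), so the maximum over
   r <= n1 is the true maximum; r = 0 always qualifies. *)
Definition subrank (R : realType) n1 n2 n3 (T : tensor R n1 n2 n3) : nat :=
  (\max_(r < n1.+1 | `[< restricts_to_unit T r >]) (r : nat))%N.

(* Let phi1 (x) phi2 (x) phi3 send T to I_(r+1).  The same maps send T + v to
   I_(r+1) + a (x) b (x) c for vectors a, b, c.  Pick a coordinate p with
   a_p <> 0 (any p if a = 0) and let psi : R^(r+1) -> R^r be the linear map
   that fixes e_j for j <> p (after renumbering) and sends e_p to
   -sum_(j <> p) (a_j / a_p) e_j, so that psi a = 0.  Applying psi on the first
   factor and the deletion of coordinate p on the other two maps I_(r+1) to I_r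
   and a (x) b (x) c to 0, so T + v restricts to I_r. *)
From mathcomp Require Import all_boot all_order all_algebra.
From mathcomp Require Import boolp reals ring.
Set Implicit Arguments. Unset Strict Implicit. Unset Printing Implicit Defensive.
Import GRing.Theory.
Local Open Scope ring_scope.

Lemma sum_kronecker_mull (R : pzSemiRingType) (I : finType) (i : I) (F : I -> R) :
  \sum_j (i == j)%:R * F j = F i.
Proof.
rewrite (bigD1 i) //= eqxx mul1r big1 ?addr0 // => j neq_ji.
by rewrite eq_sym (negbTE neq_ji) mul0r.
Qed.

Lemma exchange_big3 (V : nmodType) (I1 I2 I3 J1 J2 J3 : finType)
    (F : I1 -> I2 -> I3 -> J1 -> J2 -> J3 -> V) :
  \sum_i \sum_j \sum_k \sum_a \sum_b \sum_c F i j k a b c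
  = \sum_a \sum_b \sum_c \sum_i \sum_j \sum_k F i j k a b c.
Proof.
under eq_bigr => i _ do under eq_bigr => j _ do rewrite exchange_big.
under eq_bigr => i _ do rewrite exchange_big.
rewrite exchange_big.
under eq_bigr => a _ do under eq_bigr => i _ do under eq_bigr => j _ do
  rewrite exchange_big.
under eq_bigr => a _ do under eq_bigr => i _ do rewrite exchange_big.
under eq_bigr => a _ do rewrite exchange_big.
under eq_bigr => a _ do under eq_bigr => b _ do under eq_bigr => i _ do
  under eq_bigr => j _ do rewrite exchange_big.
under eq_bigr => a _ do under eq_bigr => b _ do under eq_bigr => i _ do
  rewrite exchange_big.
by under eq_bigr => a _ do under eq_bigr => b _ do rewrite exchange_big.
Qed.

Lemma mulr_sum3 (R : pzSemiRingType) (J1 J2 J3 : finType)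
    (f : J1 -> R) (g : J2 -> R) (h : J3 -> R) t :
  (\sum_a f a) * (\sum_b g b) * (\sum_c h c) * t
  = \sum_a \sum_b \sum_c f a * g b * h c * t.
Proof.
rewrite !mulr_suml; apply: eq_bigr => a _.
rewrite -!mulrA mulr_suml mulr_sumr; apply: eq_bigr => b _.
rewrite mulr_suml !mulr_sumr; apply: eq_bigr => c _.
by rewrite !mulrA.
Qed.

Section Restriction.
Variable R : realType.

Definition mx_apply r n (A : 'M[R]_(r, n)) (u : 'I_n -> R) : 'I_r -> R :=
  fun a => \sum_i A a i * u i.

Lemma tmap_tadd n1 n2 n3 r (A1 : 'M[R]_(r, n1)) (A2 : 'M[R]_(r, n2))
    (A3 : 'M[R]_(r, n3)) (T S : tensor R n1 n2 n3) :
  tmap A1 A2 A3 (tadd T S) = tadd (tmap A1 A2 A3 T) (tmap A1 A2 A3 S).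
Proof.
apply: funext => a; apply: funext => b; apply: funext => c.
rewrite /tmap /tadd -!big_split; apply: eq_bigr => i _.
rewrite -!big_split; apply: eq_bigr => j _.
rewrite -!big_split; apply: eq_bigr => k _.
by rewrite mulrDr.
Qed.

Lemma tmap_outer3 n1 n2 n3 r (A1 : 'M[R]_(r, n1)) (A2 : 'M[R]_(r, n2))
    (A3 : 'M[R]_(r, n3)) u1 u2 u3 :
  tmap A1 A2 A3 (outer3 u1 u2 u3)
  = outer3 (mx_apply A1 u1) (mx_apply A2 u2) (mx_apply A3 u3).
Proof.
apply: funext => a; apply: funext => b; apply: funext => c.
rewrite /outer3 /mx_apply -[RHS]mulr1 mulr_sum3.
apply: eq_bigr => i _; apply: eq_bigr => j _; apply: eq_bigr => k _; ring.
Qed.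

Lemma tmap_unit_tensor n r (A1 A2 A3 : 'M[R]_(r, n)) a b c :
  tmap A1 A2 A3 (@unit_tensor R n) a b c = \sum_i A1 a i * A2 b i * A3 c i.
Proof.
rewrite /tmap; apply: eq_bigr => i _.
have unit_term j k : A1 a i * A2 b j * A3 c k * unit_tensor R i j k
    = (j == k)%:R * ((i == j)%:R * (A1 a i * A2 b j * A3 c k)).
  by rewrite /unit_tensor -mulnb natrM; ring.
under eq_bigr => j _ do under eq_bigr => k _ do rewrite unit_term.
under eq_bigr => j _ do rewrite sum_kronecker_mull.
by rewrite sum_kronecker_mull.
Qed.

Lemma tmap_mul n1 n2 n3 r s (A1 : 'M[R]_(r, n1)) (A2 : 'M[R]_(r, n2))
    (A3 : 'M[R]_(r, n3)) (P1 P2 P3 : 'M[R]_(s, r)) (T : tensor R n1 n2 n3) :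
  tmap (P1 *m A1) (P2 *m A2) (P3 *m A3) T = tmap P1 P2 P3 (tmap A1 A2 A3 T).
Proof.
apply: funext => x; apply: funext => y; apply: funext => z.
rewrite /tmap.
under eq_bigr => i _ do under eq_bigr => j _ do under eq_bigr => k _ do
  rewrite !mxE mulr_sum3.
rewrite exchange_big3.
apply: eq_bigr => a _; apply: eq_bigr => b _; apply: eq_bigr => c _.
rewrite !mulr_sumr; apply: eq_bigr => i _.
rewrite !mulr_sumr; apply: eq_bigr => j _.
rewrite !mulr_sumr; apply: eq_bigr => k _.
ring.
Qed.

Lemma restricts_to_unit_tmap n1 n2 n3 s r (A1 : 'M[R]_(s, n1))
    (A2 : 'M[R]_(s, n2)) (A3 : 'M[R]_(s, n3)) (T : tensor R n1 n2 n3) :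
  restricts_to_unit (tmap A1 A2 A3 T) r -> restricts_to_unit T r.
Proof.
case=> P1 [P2 [P3 P_AT]].
by exists (P1 *m A1), (P2 *m A2), (P3 *m A3); rewrite tmap_mul.
Qed.

Lemma exists_retraction_annihilating r (a : 'I_r.+1 -> R) :
  exists (p : 'I_r.+1) (Phi : 'M[R]_(r, r.+1)),
    (forall i j, Phi i (lift p j) = (i == j)%:R) /\ mx_apply Phi a = (fun=> 0).
Proof.
have [[p a_p_neq0] | a_eq0] := pselect (exists p, a p != 0).
  exists p, (\matrix_(i, j) ((lift p i == j)%:R - (p == j)%:R * (a (lift p i) / a p))).
  split=> [i j|].
    by rewrite mxE (inj_eq (@lift_inj _ p)) (negbTE (neq_lift p j)) mul0r subr0.
  apply: funext => i; rewrite /mx_apply.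
  under eq_bigr => j _ do rewrite mxE mulrBl -mulrA.
  by rewrite sumrB !sum_kronecker_mull divfK // subrr.
have a_zero j : a j = 0.
  by apply/eqP/negPn/negP => a_j_neq0; apply: a_eq0; exists j.
exists ord0, (row' ord0 1%:M); split=> [i j|].
  by rewrite !mxE (inj_eq (@lift_inj _ ord0)).
by apply: funext => i; rewrite /mx_apply big1 // => j _; rewrite a_zero mulr0.
Qed.

Lemma tmap_unit_tensor_retraction r p (Phi : 'M[R]_(r, r.+1)) :
    (forall i j, Phi i (lift p j) = (i == j)%:R) ->
  tmap Phi (row' p 1%:M) (row' p 1%:M) (@unit_tensor R r.+1) = @unit_tensor R r.
Proof.
move=> Phi_lift; apply: funext => x; apply: funext => y; apply: funext => z.
rewrite tmap_unit_tensor.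
under eq_bigr => i _ do rewrite [row' p _ y i]mxE [1%:M _ i]mxE mulrAC mulrC.
rewrite sum_kronecker_mull Phi_lift !mxE (inj_eq (@lift_inj _ p)) /unit_tensor.
by rewrite [z == y]eq_sym -natrM mulnb.
Qed.

Lemma unit_tensor_add_outer3 r (a b c : 'I_r.+1 -> R) :
  restricts_to_unit (tadd (@unit_tensor R r.+1) (outer3 a b c)) r.
Proof.
have [p [Phi [Phi_lift Phi_a]]] := exists_retraction_annihilating a.
exists Phi, (row' p 1%:M), (row' p 1%:M).
rewrite tmap_tadd tmap_unit_tensor_retraction // tmap_outer3 Phi_a.
apply: funext => x; apply: funext => y; apply: funext => z.
by rewrite /tadd /outer3 !mul0r addr0.
Qed.

Lemma restricts_to_unit_add_outer3 n1 n2 n3 (T : tensor R n1 n2 n3) r v1 v2 v3 :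
  restricts_to_unit T r.+1 -> restricts_to_unit (tadd T (outer3 v1 v2 v3)) r.
Proof.
case=> A1 [A2 [A3 A_T]].
apply: (restricts_to_unit_tmap (A1 := A1) (A2 := A2) (A3 := A3)).
by rewrite tmap_tadd A_T tmap_outer3; apply: unit_tensor_add_outer3.
Qed.

Lemma restricts_to_unit0 n1 n2 n3 (T : tensor R n1 n2 n3) : restricts_to_unit T 0.
Proof. by exists 0, 0, 0; apply: funext => -[]. Qed.

Lemma restricts_to_unit_subrank n1 n2 n3 (T : tensor R n1 n2 n3) :
  restricts_to_unit T (subrank T).
Proof.
apply: big_ind => [|x y T_x T_y|i /asboolP //]; first exact: restricts_to_unit0.
by rewrite /maxn; case: ifP.
Qed.

Lemma subrank_le n1 n2 n3 (T : tensor R n1 n2 n3) : (subrank T <= n1)%N.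
Proof. by apply/bigmax_leqP => i _; rewrite -ltnS. Qed.

Lemma subrank_ge n1 n2 n3 (T : tensor R n1 n2 n3) r :
  (r <= n1)%N -> restricts_to_unit T r -> (r <= subrank T)%N.
Proof.
rewrite -ltnS => r_lt T_r.
by apply: (leq_bigmax_cond (Ordinal r_lt)); apply/asboolP.
Qed.

End Restriction.

Theorem lemma3p1 (R : realType) (n1 n2 n3 : nat)
  (T v : tensor R n1 n2 n3) :
  rank_one v ->
  (subrank T - 1 <= subrank (tadd T v))%N.
Proof.
case=> _ [v1 [v2 [v3 v_eq]]].
have -> : v = outer3 v1 v2 v3.
  by apply: funext => i; apply: funext => j; apply: funext => k.
have := restricts_to_unit_subrank T; have := subrank_le T.
case: (subrank T) => [//|r] r_lt T_r.
rewrite subSS subn0; apply: subrank_ge; first exact: ltnW.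
exact: restricts_to_unit_add_outer3.
Qed.
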